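(* The Sex-Equal matching mechanism $SE$ and the Egalitarian Stable matching mechanism $ES$ are symmetric (i.e. $G^*$-symmetric).
   Context: Fix $n\ge 2$, $W=\{1,\dots,n\}$, $M=\{n+1,\dots,2n\}$, $I=W\cup M$. Permutations compose right-to-left. A preference profile is a function $p$ on $I$ assigning to each $x\in W$ a linear order $p(x)$ on $M$ and to each $y\in M$ a linear order $p(y)$ on $W$; $\mathcal{P}$ is the set of preference profiles. For a linear order $R$ on $X$ and $a\in X$, $\mathrm{Rank}_R(a)=|\{b\in X:b\succeq_R a\}|$. A matching is a permutation $\mu$ of $I$ with $\mu(W)=M$, $\mu(M)=W$, $\mu(\mu(z))=z$; $\mathcal{M}$ is the set of matchings. $\mu$ is stable for $p$ if there is no $(x,y)\in W\times M$ with $y\succ_{p(x)}\mu(x)$ and $x\succ_{p(y)}\mu(y)$; $ST(p)$ is the set of matchings stable for $p$. Let $\delta(p,\mu)=\left|\sum_{x\in W}\mathrm{Rank}_{p(x)}(\mu(x))-\sum_{y\in M}\mathrm{Rank}_{p(y)}(\mu(y))\right|$ and $e(p,\mu)=\sum_{x\in W}\mathrm{Rank}_{p(x)}(\mu(x))+\sum_{y\in M}\mathrm{Rank}_{p(y)}(\mu(y))$. $SE(p)=\arg\min_{\mu\in ST(p)}\delta(p,\mu)$ and $ES(p)=\arg\min_{\mu\in ST(p)}e(p,\mu)$. $G^*=\{\varphi\in\mathrm{Sym}(I):\{\varphi(W),\varphi(M)\}=\{W,M\}\}$. For a linear order $R$ on $X\subseteq I$ and $\varphi\in\mathrm{Sym}(I)$,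 $\varphi R$ is the relation on $\varphi(X)$ with $(a,b)\in\varphi R$ iff $(\varphi^{-1}(a),\varphi^{-1}(b))\in R$. For $\varphi\in G^*$, $p^\varphi(z)=\varphi\,p(\varphi^{-1}(z))$; $\mu^\varphi=\varphi\mu\varphi^{-1}$; $S^\varphi=\{\mu^\varphi:\mu\in S\}$. A matching mechanism (correspondence $F$ from $\mathcal{P}$ to $\mathcal{M}$) is symmetric if $F(p^\varphi)=F(p)^\varphi$ for all $p\in\mathcal{P}$, $\varphi\in G^*$. *)

From mathcomp Require Import all_boot all_order all_fingroup all_algebra.
Set Implicit Arguments. Unset Strict Implicit. Unset Printing Implicit Defensive.
Import GRing.Theory Num.Theory.

(* Agents: I = 'I_(n+n); W = {0,...,n-1} (paper's 1..n), M = {n,...,2n-1}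
   (paper's n+1..2n).  0-based shift of the paper's labels. *)
Section Matching.
Variable n : nat.
Definition agent := 'I_(n + n).
Definition Wset : {set agent} := [set i : agent | (i < n)%N].
Definition Mset : {set agent} := [set i : agent | (n <= i)%N].

(* A (reflexive, "weak") linear order on X, as a boolean relation on I whose
   field is exactly X.  (a,b) \in R  is written  R a b  and means a >=_R b. *)
Definition linear_order_on (X : {set agent}) (R : rel agent) : Prop :=
  [/\ (forall a b, R a b -> (a \in X) && (b \in X)),
      (forall a, a \in X -> R a a),
      (forall a b, R a b -> R b a -> a = b),
      (forall a b c, R a b -> R b c -> R a c)
    & (forall a b, a \in X -> b \in X -> R a b || R b a)].

Definition strict (R : rel agent) (a b : agent) : bool := R a b && (a != b).

Definition Rank (R : rel agent) (a : agent) : nat := #|[set b | R b a]|.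

Definition profile := agent -> rel agent.
Definition is_profile (p : profile) : Prop :=
  (forall x, x \in Wset -> linear_order_on Mset (p x)) /\
  (forall y, y \in Mset -> linear_order_on Wset (p y)).

Definition is_matching (mu : {perm agent}) : bool :=
  [&& mu @: Wset == Mset, mu @: Mset == Wset & [forall z, mu (mu z) == z]].

Definition is_stable (p : profile) (mu : {perm agent}) : bool :=
  ~~ [exists x in Wset, exists y in Mset,
        strict (p x) y (mu x) && strict (p y) x (mu y)].

Definition ST (p : profile) : {set {perm agent}} :=
  [set mu | is_matching mu && is_stable p mu].

Definition sumW (p : profile) (mu : {perm agent}) : nat :=
  \sum_(x in Wset) Rank (p x) (mu x).
Definition sumM (p : profile) (mu : {perm agent}) : nat :=
  \sum_(y in Mset) Rank (p y) (mu y).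

Definition delta (p : profile) (mu : {perm agent}) : nat :=
  absz (Posz (sumW p mu) - Posz (sumM p mu))%R.
Definition egal (p : profile) (mu : {perm agent}) : nat :=
  sumW p mu + sumM p mu.

Definition argmin_ST (f : {perm agent} -> nat) (p : profile) : {set {perm agent}} :=
  [set mu in ST p | [forall nu in ST p, f mu <= f nu]].

Definition SE (p : profile) : {set {perm agent}} := argmin_ST (delta p) p.
Definition ES (p : profile) : {set {perm agent}} := argmin_ST (egal p) p.

Definition in_Gstar (phi : {perm agent}) : bool :=
  [set phi @: Wset; phi @: Mset] == [set Wset; Mset].

Definition act_rel (phi : {perm agent}) (R : rel agent) : rel agent :=
  fun a b => R ((phi^-1)%g a) ((phi^-1)%g b).

Definition act_profile (phi : {perm agent}) (p : profile) : profile :=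
  fun z => act_rel phi (p ((phi^-1)%g z)).

(* mu^phi = phi o mu o phi^-1 (right-to-left composition), i.e. the map
   z |-> phi (mu (phi^-1 z)); in mathcomp's left-to-right perm product this
   is phi^-1 * mu * phi. *)
Definition act_matching (phi mu : {perm agent}) : {perm agent} :=
  (phi^-1 * mu * phi)%g.

Definition act_set (phi : {perm agent}) (S : {set {perm agent}}) :
  {set {perm agent}} := [set act_matching phi mu | mu in S].

Definition symmetric_mech (F : profile -> {set {perm agent}}) : Prop :=
  forall (p : profile) (phi : {perm agent}),
    is_profile p -> in_Gstar phi -> F (act_profile phi p) = act_set phi (F p).

Lemma act_matching_apply (phi mu : {perm agent}) z :
  act_matching phi mu z = phi (mu ((phi^-1)%g z)).
Proof. by rewrite /act_matching !permM. Qed.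
End Matching.

From mathcomp Require Import all_boot all_order all_fingroup all_algebra.
Set Implicit Arguments. Unset Strict Implicit. Unset Printing Implicit Defensive.

(* An element of G* either fixes both sides of the market or swaps them.
   Relabelling agents by such a permutation transports stable matchings to
   stable matchings (blocking pairs go to blocking pairs, and a pair lies
   across the two sides iff its image does) and carries every rank to the
   same rank, so the two side totals are preserved or exchanged.  Hence
   delta and egal are invariant, and so are their minimisers over ST. *)

Lemma eq_perm_imset (T : finType) (s : {perm T}) (A B : {set T}) :
  (s @: A == B) = [forall x, (s x \in B) == (x \in A)].
Proof.
apply/eqP/forallP => [<- x | sAB]; first by rewrite eq_sym mem_imset //; exact: perm_inj.
apply/setP => z; rewrite -(permKV s z) mem_imset; last exact: perm_inj.
by rewrite (eqP (sAB _)).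
Qed.

Lemma forall_perm (T : finType) (s : {perm T}) (P : pred T) :
  [forall x, P (s x)] = [forall x, P x].
Proof.
apply/forallP/forallP => sP x; last exact: sP.
by rewrite -(permKV s x); exact: sP.
Qed.

Lemma exists_pair_perm (T : finType) (s : {perm T}) (P : rel T) :
  [exists x, exists y, P (s x) (s y)] = [exists x, exists y, P x y].
Proof.
apply/existsP/existsP => [[x /existsP [y Pxy]] | [x /existsP [y Pxy]]].
  by exists (s x); apply/existsP; exists (s y).
by exists ((s^-1)%g x); apply/existsP; exists ((s^-1)%g y); rewrite !permKV.
Qed.

Section Relabelling.
Variable n : nat.
Local Notation W := (Wset n).
Local Notation M := (Mset n).

Lemma in_Mset (z : agent n) : (z \in M) = ~~ (z \in W).
Proof. by rewrite !inE leqNgt. Qed.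

Lemma in_Gstar_sides (phi : {perm agent n}) :
  in_Gstar phi -> exists s : bool, forall x, (phi x \in W) = s (+) (x \in W).
Proof.
move/eqP=> Gphi; have : phi @: W \in [set W; M] by rewrite -Gphi set21.
have phiW x : (phi x \in phi @: W) = (x \in W) by rewrite mem_imset //; exact: perm_inj.
case/set2P=> phiWE; [exists false | exists true] => x /=.
  by rewrite -{1}phiWE phiW.
by rewrite -[x \in W]phiW phiWE in_Mset negbK.
Qed.

Lemma act_matchingE (phi mu : {perm agent n}) : act_matching phi mu = (mu ^ phi)%g.
Proof. by rewrite conjgE mulgA. Qed.

Lemma Rank_act_rel (phi : {perm agent n}) (R : rel (agent n)) a :
  Rank (act_rel phi R) (phi a) = Rank R a.
Proof.
rewrite /Rank /act_rel permK.
have -> : [set b | R ((phi^-1)%g b) a] = phi @: [set c | R c a].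
  apply/setP => z; rewrite -{2}(permKV phi z) mem_imset ?inE //; exact: perm_inj.
by rewrite card_imset //; exact: perm_inj.
Qed.

Lemma sum_Rank_act (phi : {perm agent n}) (A : {set agent n}) p mu :
  \sum_(x in A) Rank (act_profile phi p x) (act_matching phi mu x) =
  \sum_(x | phi x \in A) Rank (p x) (mu x).
Proof.
rewrite (reindex_inj (@perm_inj _ phi)); apply: eq_bigr => x _.
by rewrite /act_profile act_matching_apply !permK Rank_act_rel.
Qed.

Definition blocking_pair (p : profile n) (mu : {perm agent n}) x y : bool :=
  strict (p x) y (mu x) && strict (p y) x (mu y).

Lemma blocking_pairC p mu x y : blocking_pair p mu x y = blocking_pair p mu y x.
Proof. exact: andbC. Qed.

Lemma blocking_pair_act phi p mu x y :
  blocking_pair (act_profile phi p) (act_matching phi mu) (phi x) (phi y) =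
  blocking_pair p mu x y.
Proof.
by rewrite /blocking_pair /strict /act_profile /act_rel !act_matching_apply
  !permK !(inj_eq (@perm_inj _ phi)).
Qed.

Lemma is_stableE p mu :
  is_stable p mu =
  ~~ [exists x, exists y, ((x \in W) != (y \in W)) && blocking_pair p mu x y].
Proof.
congr negb; apply/existsP/existsP => [[x /andP [xW /existsP [y /andP [yM b]]]] |].
  by exists x; apply/existsP; exists y; rewrite xW -in_Mset yM.
case=> x /existsP [y /andP [xy b]]; have [xW | xM] := boolP (x \in W).
  exists x; rewrite xW; apply/existsP; exists y; apply/andP; split=> //.
  by rewrite in_Mset; move: xy; rewrite xW; case: (y \in W).
have yW : y \in W by move: xy; rewrite (negPf xM); case: (y \in W).
exists y; rewrite yW; apply/existsP; exists x; apply/andP; split.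
  by rewrite in_Mset.
by rewrite blocking_pairC in b.
Qed.

Lemma is_matchingE mu :
  is_matching mu = [forall x, (mu x \in W) != (x \in W)] && [forall z, mu (mu z) == z].
Proof.
rewrite /is_matching !eq_perm_imset andbA; congr andb.
have -> : [forall x, (mu x \in W) == (x \in M)] = [forall x, (mu x \in W) != (x \in W)].
  by apply: eq_forallb => x; rewrite in_Mset; case: (_ \in _); case: (_ \in _).
rewrite andb_idl // => /forallP sides; apply/forallP => x.
by rewrite in_Mset; move: (sides x); case: (_ \in _); case: (_ \in _).
Qed.

Section SideRespecting.
Variables (phi : {perm agent n}) (s : bool).
Hypothesis phi_sides : forall x, (phi x \in W) = s (+) (x \in W).

Lemma opposite_sides_act x y :
  ((phi x \in W) != (phi y \in W)) = ((x \in W) != (y \in W)).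
Proof. by rewrite !phi_sides; case: s; rewrite //= (inj_eq negb_inj). Qed.

Lemma matching_act mu : is_matching (act_matching phi mu) = is_matching mu.
Proof.
rewrite !is_matchingE; congr andb; rewrite -(forall_perm phi); apply: eq_forallb => x;
  rewrite !act_matching_apply !permK.
  exact: opposite_sides_act.
exact: (inj_eq (@perm_inj _ phi)).
Qed.

Lemma stable_act p mu :
  is_stable (act_profile phi p) (act_matching phi mu) = is_stable p mu.
Proof.
rewrite !is_stableE -(exists_pair_perm phi); congr negb.
apply: eq_existsb => x; apply: eq_existsb => y.
by rewrite opposite_sides_act blocking_pair_act.
Qed.

Lemma ST_act p mu : (act_matching phi mu \in ST (act_profile phi p)) = (mu \in ST p).
Proof. by rewrite !inE matching_act stable_act. Qed.

Lemma sumW_act p mu :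
  sumW (act_profile phi p) (act_matching phi mu) = if s then sumM p mu else sumW p mu.
Proof.
rewrite /sumW sum_Rank_act /sumM.
by case: s phi_sides => sides; apply: eq_bigl => x; rewrite sides ?in_Mset.
Qed.

Lemma sumM_act p mu :
  sumM (act_profile phi p) (act_matching phi mu) = if s then sumW p mu else sumM p mu.
Proof.
rewrite /sumM sum_Rank_act /sumW.
by case: s phi_sides => sides; apply: eq_bigl => x; rewrite !in_Mset sides ?negbK.
Qed.

Lemma delta_act p mu : delta (act_profile phi p) (act_matching phi mu) = delta p mu.
Proof. by rewrite /delta sumW_act sumM_act; case: s => //; exact: distnC. Qed.

Lemma egal_act p mu : egal (act_profile phi p) (act_matching phi mu) = egal p mu.
Proof. by rewrite /egal sumW_act sumM_act; case: s => //; exact: addnC. Qed.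

End SideRespecting.

Lemma argmin_ST_act (phi : {perm agent n}) p p' (f f' : {perm agent n} -> nat) :
  (forall mu, (act_matching phi mu \in ST p') = (mu \in ST p)) ->
  (forall mu, f' (act_matching phi mu) = f mu) ->
  argmin_ST f' p' = act_set phi (argmin_ST f p).
Proof.
move=> STE fE; apply/setP => nu.
have -> : act_set phi (argmin_ST f p) = (argmin_ST f p :^ phi)%g.
  by apply: eq_imset => mu; exact: act_matchingE.
rewrite mem_conjg -{1}(conjgKV phi nu) -act_matchingE.
rewrite [in LHS]inE [in RHS]inE STE fE; congr andb.
apply/forallP/forallP => min_f mu.
  by move: (min_f (act_matching phi mu)); rewrite STE fE.
by rewrite -(conjgKV phi mu) -act_matchingE STE fE; exact: min_f.
Qed.

End Relabelling.

Theorem proposition10 (n : nat) (hn : (2 <= n)%N) :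
  symmetric_mech (@SE n) /\ symmetric_mech (@ES n).
Proof.
split=> p phi _ /in_Gstar_sides [s sides]; apply: argmin_ST_act => mu.
- exact: ST_act sides p mu.
- exact: delta_act sides p mu.
- exact: ST_act sides p mu.
- exact: egal_act sides p mu.
Qed.
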